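(* Let $\Lambda$ be a finite nonempty set and $m,c\ge1$ natural numbers with $|\Lambda|$ dividing $m$. Then (1) $f^{10}_\Lambda(m,c)\le m\cdot HJ(|\Lambda|^m,c)$; (2) $f^{9,*}_\Lambda(m,c)\le m\cdot HJ(|\Lambda|^m,c)$ (with the convention $m\cdot\omega=\omega$).
   Context: Let $\Lambda$ be a finite nonempty alphabet, $[k]=\{1,\dots,k\}$, and ${}^{[k]}\Lambda$ the set of functions $[k]\to\Lambda$. A $c$-colouring of ${}^{[k]}\Lambda$ is a function $d$ from ${}^{[k]}\Lambda$ into a set with at most $c$ elements. A configuration for $(k,m)$ is a pair $(\langle M_\ell:\ell<m\rangle,\eta^* )$ where (a) the $M_\ell\subseteq[k]$ are pairwise disjoint and $\eta^*$ is a function from $[k]\setminus\bigcup_{\ell<m}M_\ell$ into $\Lambda$. Its set of points is $S=\{\eta\in{}^{[k]}\Lambda:\eta^*\subseteq\eta$ and each $\eta\restriction M_\ell$ is constant$\}$, and for $\eta\in S$, $\alpha\in\Lambda$ let $\mathrm{cnt}_\eta(\alpha)=|\{\ell<m:\eta\restriction M_\ell$ is constantly $\alpha\}|$. Consider the conditions: (b) $|M_\ell|=|M_0|>0$ for all $\ell<m$; (b$'$) $M_\ell\neq\emptyset$ for all $\ell<m$; (c) $d(\nu_1)=d(\nu_2)$ whenever $\nu_1,\nu_2\in S$ and $\mathrm{cnt}_{\nu_1}(\alpha)=\mathrm{cnt}_{\nu_2}(\alpha)=m/|\Lambda|$ for every $\alpha\in\Lambda$; (c$^+$) $d(\nu_1)=d(\nu_2)$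 whenever $\nu_1,\nu_2\in S$ and $\mathrm{cnt}_{\nu_1}(\alpha)=\mathrm{cnt}_{\nu_2}(\alpha)$ for every $\alpha\in\Lambda$; (c$'$) $d\restriction S$ is constant; (d) for all $\alpha,\beta\in\Lambda$, $|\{a:\eta^*(a)=\alpha\}|=|\{a:\eta^*(a)=\beta\}|$. For a list $X$ of these conditions, the associated number is the least $k\le\omega$ divisible by $|\Lambda|$ (with $\omega$ if none exists) such that for every $c$-colouring $d$ of ${}^{[k]}\Lambda$ there is a configuration for $(k,m)$ satisfying (a) and all conditions in $X$. Then $f^{10}_\Lambda(m,c)$ uses (b),(c),(d); $f^{9,*}_\Lambda(m,c)$ uses (b),(c$^+$); $HJ_\Lambda(m,c)$ uses (b$'$),(c$'$). Finally $HJ(n,c)=HJ_{\{1,\dots,n\}}(1,c)$ (the Hales–Jewett number for an $n$-letter alphabet). *)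

From Stdlib Require Import ClassicalEpsilon.
From mathcomp Require Import all_boot.
Set Implicit Arguments. Unset Strict Implicit. Unset Printing Implicit Defensive.

(* Extended naturals nat ∪ {omega}: Some n = n, None = omega. *)
Definition natw := option nat.

Definition least_w (P : nat -> Prop) : natw :=
  match excluded_middle_informative (exists n, P n) with
  | left _ => Some (epsilon (inhabits 0%N) (fun n => P n /\ forall k, P k -> n <= k))
  | right _ => None
  end.

Definition le_w (a b : natw) : Prop :=
  match b with
  | None => True
  | Some b' => match a with Some a' => a' <= b' | None => False end
  end.

Definition mul_w (m : nat) (a : natw) : natw :=
  match a with Some a' => Some (m * a') | None => None end.

Section Config.
Variables (L : finType) (k m c : nat).

(* points of ^[k]Lambda; [k] is modelled by 'I_k *)
Definition point := {ffun 'I_k -> L}.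
(* a c-colouring: a map into a set with at most c elements, modelled by 'I_c *)
Definition colouring := point -> 'I_c.

(* A configuration: blocks M : 'I_m -> {set 'I_k}; eta* is given by a total
   function e whose values are only used off the union of the blocks. *)
Definition blocks_union (M : 'I_m -> {set 'I_k}) : {set 'I_k} := \bigcup_(l < m) M l.

Definition cond_a (M : 'I_m -> {set 'I_k}) : Prop :=
  forall l l' : 'I_m, l != l' -> [disjoint M l & M l'].

Definition in_S (M : 'I_m -> {set 'I_k}) (e : 'I_k -> L) (eta : point) : Prop :=
  (forall a, a \notin blocks_union M -> eta a = e a) /\
  (forall l : 'I_m, forall a b, a \in M l -> b \in M l -> eta a = eta b).

Definition cnt (M : 'I_m -> {set 'I_k}) (eta : point) (alpha : L) : nat :=
  #|[set l : 'I_m | [forall a in M l, eta a == alpha]]|.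

Definition cond_b (M : 'I_m -> {set 'I_k}) : Prop :=
  forall l : 'I_m, (forall l0 : 'I_m, val l0 = 0 -> #|M l| = #|M l0|) /\ 0 < #|M l|.

Definition cond_b' (M : 'I_m -> {set 'I_k}) : Prop :=
  forall l : 'I_m, M l != set0.

(* (c): cnt = m / |Lambda| written as cnt * |Lambda| = m *)
Definition cond_c (d : colouring) (M : 'I_m -> {set 'I_k}) (e : 'I_k -> L) : Prop :=
  forall nu1 nu2 : point, in_S M e nu1 -> in_S M e nu2 ->
    (forall alpha : L, cnt M nu1 alpha * #|L| = m /\ cnt M nu2 alpha * #|L| = m) ->
    d nu1 = d nu2.

Definition cond_cplus (d : colouring) (M : 'I_m -> {set 'I_k}) (e : 'I_k -> L) : Prop :=
  forall nu1 nu2 : point, in_S M e nu1 -> in_S M e nu2 ->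
    (forall alpha : L, cnt M nu1 alpha = cnt M nu2 alpha) ->
    d nu1 = d nu2.

Definition cond_c' (d : colouring) (M : 'I_m -> {set 'I_k}) (e : 'I_k -> L) : Prop :=
  forall nu1 nu2 : point, in_S M e nu1 -> in_S M e nu2 -> d nu1 = d nu2.

Definition cond_d (M : 'I_m -> {set 'I_k}) (e : 'I_k -> L) : Prop :=
  forall alpha beta : L,
    #|[set a | (a \notin blocks_union M) && (e a == alpha)]| =
    #|[set a | (a \notin blocks_union M) && (e a == beta)]|.

End Config.

Definition good_k (L : finType) (m c k : nat)
  (X : colouring L k c -> ('I_m -> {set 'I_k}) -> ('I_k -> L) -> Prop) : Prop :=
  (#|L| %| k) /\
  forall d : colouring L k c, exists (M : 'I_m -> {set 'I_k}) (e : 'I_k -> L),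
    cond_a M /\ X d M e.

Definition f10 (L : finType) (m c : nat) : natw :=
  least_w (fun k => good_k (L := L) (m := m) (c := c) (k := k) (fun d M e => cond_b M /\ cond_c d M e /\ cond_d M e)).

Definition f9star (L : finType) (m c : nat) : natw :=
  least_w (fun k => good_k (L := L) (m := m) (c := c) (k := k)
                      (fun d M e => cond_b M /\ cond_cplus d M e)).

Definition HJL (L : finType) (m c : nat) : natw :=
  least_w (fun k => good_k (L := L) (m := m) (c := c) (k := k)
                      (fun d M e => cond_b' M /\ cond_c' d M e)).

(* HJ(n,c) = HJ_{1..n}(1,c); the n-letter alphabet is 'I_n *)
Definition HJ (n c : nat) : natw := HJL 'I_n 1 c.

(* Split the m·h coordinates of a cube over Λ into m rows of h columns, so that a point is a
   word of length h over the alphabet Λ^m. Pull a colouring back along a retraction r of Λ^m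
   and take a combinatorial line of the resulting colouring of (Λ^m)^h. Its active columns give
   m equal-size blocks (one per row); a point of the blown-up configuration whose common active
   column w is fixed by r then lies on the line, so all such points get the same colour.
   For f^{9,*} take r = id: the colouring is constant on the whole configuration, which is
   stronger than (c+). For f^{10} let r fix the balanced words, i.e. those in which every letter
   occurs m/|Λ| times, and send every other word to one fixed balanced word: the points in (c)
   are exactly those with w balanced, and since the fixed part takes values in balanced words,
   (d) holds. *)

From Stdlib Require Import Classical ClassicalEpsilon.
From mathcomp Require Import all_boot.
Set Implicit Arguments. Unset Strict Implicit. Unset Printing Implicit Defensive.

Lemma exists_least_nat (P : nat -> Prop) k :
  P k -> exists n, P n /\ forall j, P j -> n <= j.
Proof.
elim: k {-2}k (leqnn k) => [|N IH] k le_kN Pk.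
  by exists k; split=> // j _; move: le_kN; rewrite leqn0 => /eqP->.
have [[j [lt_jk Pj]]|no_less] := classic (exists j, j < k /\ P j).
  by apply: (IH j) => //; rewrite -ltnS (leq_trans lt_jk).
exists k; split=> // j Pj; rewrite leqNgt; apply/negP => lt_jk.
by apply: no_less; exists j.
Qed.

Lemma least_w_le (P : nat -> Prop) k : P k -> le_w (least_w P) (Some k).
Proof.
move=> Pk; rewrite /least_w; case: excluded_middle_informative => [exP|]; last first.
  by case; exists k.
by have [_] := epsilon_spec (inhabits 0) _ (exists_least_nat Pk); apply.
Qed.

Lemma least_wP (P : nat -> Prop) h : least_w P = Some h -> P h.
Proof.
rewrite /least_w; case: excluded_middle_informative => [[k Pk]|] // [<-].
by have [] := epsilon_spec (inhabits 0) _ (exists_least_nat Pk).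
Qed.

Lemma card_pred_can (T U : finType) (f : T -> U) (g : U -> T) (Q : pred U) :
  cancel f g -> cancel g f -> #|[set x | Q (f x)]| = #|[set y | Q y]|.
Proof.
move=> fK gK; have f_bij : {on Q, bijective f} by exists g => y _; rewrite ?fK ?gK.
have -> : #|[set y | Q y]| = #|Q| by apply: eq_card => y; rewrite inE.
by rewrite -(on_card_preimset f_bij); apply: eq_card => x; rewrite !inE.
Qed.

Lemma card_ord_prod a b : #|{: 'I_a * 'I_b}| = a * b.
Proof. by rewrite card_prod !card_ord. Qed.

Definition ord_pair a b (i : 'I_(a * b)) : 'I_a * 'I_b :=
  enum_val (cast_ord (esym (card_ord_prod a b)) i).
Definition pair_ord a b (p : 'I_a * 'I_b) : 'I_(a * b) :=
  cast_ord (card_ord_prod a b) (enum_rank p).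

Lemma ord_pairK a b : cancel (@ord_pair a b) (@pair_ord a b).
Proof. by move=> i; rewrite /ord_pair /pair_ord enum_valK cast_ordKV. Qed.

Lemma pair_ordK a b : cancel (@pair_ord a b) (@ord_pair a b).
Proof. by move=> p; rewrite /ord_pair /pair_ord cast_ordK enum_rankK. Qed.

Definition word (L : finType) (m : nat) := {ffun 'I_m -> L}.

Section Words.
Variables (L : finType) (m : nat).

Lemma card_word : #|{: word L m}| = #|L| ^ m.
Proof. by rewrite card_ffun card_ord. Qed.

Definition word_of_ord (i : 'I_(#|L| ^ m)) : word L m :=
  enum_val (cast_ord (esym card_word) i).
Definition ord_of_word (s : word L m) : 'I_(#|L| ^ m) :=
  cast_ord card_word (enum_rank s).

Lemma ord_of_wordK : cancel ord_of_word word_of_ord.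
Proof. by move=> s; rewrite /word_of_ord /ord_of_word cast_ordK enum_rankK. Qed.

Definition balanced (s : word L m) := [forall a, #|[set l | s l == a]| * #|L| == m].

Lemma balanced_exists : #|L| %| m -> exists s, balanced s.
Proof.
move=> dvd_Lm; set q := m %/ #|L|; have mE : m = q * #|L| by rewrite divnK.
pose row (l : 'I_m) := @ord_pair q #|L| (cast_ord mE l).
have rowK : cancel row (fun p => cast_ord (esym mE) (pair_ord p)).
  by move=> l; rewrite /row ord_pairK cast_ordK.
have rowV : cancel (fun p => cast_ord (esym mE) (pair_ord p)) row.
  by move=> p; rewrite /row cast_ordKV pair_ordK.
exists [ffun l => enum_val (row l).2]; apply/forallP => a.
have -> : #|[set l | [ffun l => enum_val (row l).2] l == a]| =
          #|[set l | (row l).2 == enum_rank a]|.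
  apply: eq_card => l; rewrite !inE ffunE.
  by apply/eqP/eqP => [<-|->]; rewrite ?enum_valK ?enum_rankK.
rewrite (card_pred_can (fun p => p.2 == enum_rank a) rowK rowV).
have -> : #|[set p : 'I_q * 'I_#|L| | p.2 == enum_rank a]| =
          #|setX [set: 'I_q] [set enum_rank a]|.
  by apply: eq_card => p; rewrite !inE.
by rewrite cardsX cards1 cardsT card_ord muln1 -mE.
Qed.

End Words.

Section BlowUp.
Variables (L : finType) (m h : nat).
Local Notation n := (#|L| ^ m).
Local Notation row a := (@ord_pair m h a).1.
Local Notation column a := (@ord_pair m h a).2.
Local Notation coord l j := (@pair_ord m h (l, j)).

Definition row_blocks (M : {set 'I_h}) (l : 'I_m) : {set 'I_(m * h)} :=
  [set a | (row a == l) && (column a \in M)].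

Definition column_word (j : 'I_h) (nu : point L (m * h)) : word L m :=
  [ffun l => nu (coord l j)].

Variable r : word L m -> word L m.

Definition blown_fixed (e : 'I_h -> 'I_n) (a : 'I_(m * h)) : L :=
  r (word_of_ord (e (column a))) (row a).

Lemma row_blocks_disjoint (M : {set 'I_h}) : cond_a (row_blocks M).
Proof.
move=> l l' neq_ll'; rewrite -setI_eq0; apply/eqP/setP => a; rewrite !inE.
apply/negP => /andP [/andP [/eqP El _] /andP [/eqP El' _]].
by move: neq_ll'; rewrite -El -El' eqxx.
Qed.

Lemma card_row_blocks (M : {set 'I_h}) l : #|row_blocks M l| = #|M|.
Proof.
rewrite (card_pred_can (fun p => (p.1 == l) && (p.2 \in M))
          (@ord_pairK m h) (@pair_ordK m h)).
have -> : #|[set p : 'I_m * 'I_h | (p.1 == l) && (p.2 \in M)]| = #|setX [set l] M|.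
  by apply: eq_card => p; rewrite !inE.
by rewrite cardsX cards1 mul1n.
Qed.

Lemma row_blocks_cond_b (M : {set 'I_h}) : M != set0 -> cond_b (row_blocks M).
Proof.
move=> M_neq0 l; split; first by move=> l0 _; rewrite !card_row_blocks.
by rewrite card_row_blocks card_gt0.
Qed.

Lemma mem_row_blocks_union (M : {set 'I_h}) a : (a \in blocks_union (row_blocks M)) = (column a \in M).
Proof.
apply/bigcupP/idP => [[l _]|Ma]; first by rewrite inE => /andP [].
by exists (row a) => //; rewrite inE eqxx.
Qed.

Lemma cnt_row_blocks (M : {set 'I_h}) (e : 'I_(m * h) -> L) j nu alpha : j \in M -> in_S (row_blocks M) e nu ->
  cnt (row_blocks M) nu alpha = #|[set l | column_word j nu l == alpha]|.
Proof.
move=> Mj [_ nu_const]; apply: eq_card => l; rewrite !inE ffunE.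
have Mlj : coord l j \in row_blocks M l by rewrite inE pair_ordK eqxx Mj.
apply/forall_inP/idP => [|/eqP nu_lj a Ma]; first exact.
by rewrite (nu_const l a (coord l j)) // nu_lj.
Qed.

Lemma blown_fixed_cond_d (M : {set 'I_h}) (e : 'I_h -> 'I_n) :
  (forall s alpha beta, #|[set l | r s l == alpha]| = #|[set l | r s l == beta]|) ->
  cond_d (row_blocks M) (blown_fixed e).
Proof.
move=> r_even alpha beta.
have count_fixed g :
  #|[set a | (a \notin blocks_union (row_blocks M)) && (blown_fixed e a == g)]| =
  \sum_(j | j \notin M) #|[set l | r (word_of_ord (e j)) l == g]|.
  pose swap (p : 'I_h * 'I_m) := coord p.2 p.1.
  have swap_bij : bijective swap.
    exists (fun a => (column a, row a)) => [[j l]|a]; rewrite /swap ?pair_ordK //.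
    by rewrite -surjective_pairing ord_pairK.
  rewrite -sum1dep_card (reindex swap (onW_bij _ swap_bij)) /=.
  under [RHS]eq_bigr do rewrite -sum1dep_card.
  rewrite pair_big_dep; apply: eq_bigl => -[j l] /=.
  by rewrite mem_row_blocks_union /blown_fixed /swap pair_ordK.
by rewrite !count_fixed; apply: eq_bigr => j _; apply: r_even.
Qed.

Lemma blown_line_monochromatic c :
  good_k (L := 'I_n) (m := 1) (c := c) (k := h) (fun d M e => cond_b' M /\ cond_c' d M e) ->
  forall d : colouring L (m * h) c,
  exists (M : {set 'I_h}) (e : 'I_h -> 'I_n) (j : 'I_h), j \in M /\
    forall nu1 nu2, in_S (row_blocks M) (blown_fixed e) nu1 ->
      in_S (row_blocks M) (blown_fixed e) nu2 ->
      r (column_word j nu1) = column_word j nu1 -> r (column_word j nu2) = column_word j nu2 ->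
      d nu1 = d nu2.
Proof.
move=> [_ HJ] d.
pose blow (w : {ffun 'I_h -> 'I_n}) : point L (m * h) :=
  [ffun a => r (word_of_ord (w (column a))) (row a)].
have [M1 [e [_ [M1_neq0 line_mono]]]] := HJ (fun w => d (blow w)).
set M := M1 ord0; have /set0Pn [j Mj] : M != set0 by apply: M1_neq0.
exists M, e, j; split=> // nu1 nu2.
have union_M1 : blocks_union M1 = M by rewrite /blocks_union big_ord1.
pose shrink nu : {ffun 'I_h -> 'I_n} :=
  [ffun j' => if j' \in M then ord_of_word (column_word j nu) else e j'].
have shrink_on_line nu : in_S M1 e (shrink nu).
  split=> [a|l a b]; rewrite !ffunE; first by rewrite union_M1 => /negbTE ->.
  by rewrite (ord1 l) => -> ->.
have shrinkK nu : in_S (row_blocks M) (blown_fixed e) nu ->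
    r (column_word j nu) = column_word j nu -> blow (shrink nu) = nu.
  move=> [nu_fixed nu_const] r_nu; apply/ffunP => a; rewrite !ffunE.
  case: ifP => Ma; last by rewrite nu_fixed // mem_row_blocks_union Ma.
  rewrite ord_of_wordK r_nu ffunE.
  by apply: (nu_const (row a)); rewrite inE ?pair_ordK eqxx.
move=> S1 S2 r1 r2.
by rewrite -(shrinkK _ S1 r1) -(shrinkK _ S2 r2); apply: line_mono.
Qed.

End BlowUp.

Section Bounds.
Variables (L : finType) (m c h : nat).
Hypothesis HJ_h : good_k (L := 'I_(#|L| ^ m)) (m := 1) (c := c) (k := h)
  (fun d M e => cond_b' M /\ cond_c' d M e).

Lemma f9star_good : #|L| %| m ->
  good_k (L := L) (m := m) (c := c) (k := m * h)
    (fun d M e => cond_b M /\ cond_cplus d M e).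
Proof.
move=> dvd_Lm; split=> [|d]; first exact: dvdn_mulr.
have [M [e [j [Mj d_const]]]] := blown_line_monochromatic id HJ_h d.
exists (row_blocks M), (blown_fixed id e); split; first exact: row_blocks_disjoint.
split; first by apply: row_blocks_cond_b; apply/set0Pn; exists j.
by move=> nu1 nu2 S1 S2 _; apply: d_const.
Qed.

Lemma f10_good : 0 < #|L| -> #|L| %| m ->
  good_k (L := L) (m := m) (c := c) (k := m * h)
    (fun d M e => cond_b M /\ cond_c d M e /\ cond_d M e).
Proof.
move=> L_gt0 dvd_Lm; split=> [|d]; first exact: dvdn_mulr.
have [s0 s0_bal] := balanced_exists dvd_Lm.
pose r (s : word L m) := if balanced s then s else s0.
have r_bal s : balanced (r s) by rewrite /r; case: ifP.
have [M [e [j [Mj d_const]]]] := blown_line_monochromatic r HJ_h d.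
exists (row_blocks M), (blown_fixed r e); split; first exact: row_blocks_disjoint.
split; first by apply: row_blocks_cond_b; apply/set0Pn; exists j.
split.
- move=> nu1 nu2 S1 S2 cnt_bal.
  have r_fixed nu : in_S (row_blocks M) (blown_fixed r e) nu ->
      (forall alpha, cnt (row_blocks M) nu alpha * #|L| = m) ->
      r (column_word j nu) = column_word j nu.
    move=> Snu nu_bal; rewrite /r ifT //; apply/forallP => alpha.
    by rewrite -(cnt_row_blocks alpha Mj Snu) nu_bal.
  by apply: d_const => //; apply: r_fixed => // alpha; case: (cnt_bal alpha).
- apply: blown_fixed_cond_d => s alpha beta.
  have /forallP r_s := r_bal s.
  by apply/eqP; rewrite -(eqn_pmul2r L_gt0) (eqP (r_s alpha)) (eqP (r_s beta)).
Qed.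

End Bounds.

Theorem mainTheorem2 (L : finType) (m c : nat) :
  0 < #|L| -> 0 < m -> 0 < c -> #|L| %| m ->
  le_w (f10 L m c) (mul_w m (HJ (#|L| ^ m) c)) /\
  le_w (f9star L m c) (mul_w m (HJ (#|L| ^ m) c)).
Proof.
move=> L_gt0 _ _ dvd_Lm.
case HJ_eq: (HJ (#|L| ^ m) c) => [h|] //=.
have HJ_h := least_wP HJ_eq.
by split; apply: least_w_le; [exact: f10_good | exact: f9star_good].
Qed.
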